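(* Let $a_1,\dots,a_n$ be positive integers, not both $n=1$ and $a_1=1$, and let $[a_1,\dots,a_n]=p/q$ with $p,q$ relatively prime positive integers. Then \[ [a_1,\dots,a_{n-1},a_n+1,a_n-1,a_{n-1},\dots,a_1]=\frac{p^2}{pq+(-1)^n}. \]
   Context: $[b_1,\dots,b_k]=b_1+\cfrac{1}{b_2+\cfrac{1}{\ddots+\cfrac{1}{b_k}}}$ denotes a continued fraction. An entry $0$ in the interior of a continued fraction is interpreted via $[\dots,a,0,b,\dots]=[\dots,a+b,\dots]$ (this occurs when $a_n=1$). *)

From mathcomp Require Import all_boot all_algebra.
Set Implicit Arguments. Unset Strict Implicit. Unset Printing Implicit Defensive.
Import GRing.Theory Num.Theory.
Local Open Scope ring_scope.

(* An interior entry 0 is handled by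
   plain field arithmetic: a + 1/(0 + 1/y) = a + y, which is exactly the
   convention [.., a, 0, b, ..] = [.., a + b, ..] of the paper. *)
Fixpoint cf (s : seq rat) : rat :=
  match s with
  | [::] => 0
  | [:: x] => x
  | x :: t => x + (cf t)^-1
  end.

From mathcomp Require Import all_boot all_order all_algebra.
From mathcomp Require Import ring.
Set Implicit Arguments. Unset Strict Implicit. Unset Printing Implicit Defensive.
Import Order.TTheory GRing.Theory Num.Theory.
Local Open Scope ring_scope.

(* The matrices [[x, 1], [1, 0]] multiply out the continued fraction: the
   first column of their product over s = [b_1, ..., b_k] is (numerator,
   denominator) of [b_1, ..., b_k], and its determinant (-1)^k forces that
   fraction to be in lowest terms.  Nonnegative entries with a positive last
   one keep every denominator positive, so an interior a_n - 1 = 0 is harmless.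
   For the palindrome t = L ++ [a + 1; a - 1] ++ rev L the product is A B A^T
   with A the matrix of L and B = v v^T + J, where v = (a, 1)^T and J is the
   rotation [[0, 1], [-1, 0]]; since A v = (p, q)^T and A J A^T = det A J, the
   first column of the matrix of t is (p^2, pq - det A). *)

Lemma iota_rcons m n : iota m n.+1 = rcons (iota m n) (m + n)%N.
Proof. by rewrite -addn1 iotaD cats1. Qed.

Lemma last_palindrome (T : Type) (x0 y z : T) (s : seq T) :
  last x0 (s ++ [:: y; z] ++ rev s) = head z s.
Proof. by case: s => [|w s] //; rewrite !last_cat rev_cons last_rcons. Qed.

Lemma numq_denq_natr_div (p q : nat) : coprime p q -> (0 < q)%N ->
  numq (p%:R / q%:R) = p /\ denq (p%:R / q%:R) = q.
Proof.
move=> cop_pq q_gt0; rewrite !pmulrn coprimeq_num ?coprimeq_den //.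
by rewrite gtr0_sg ?ltz_nat // mul1r eqz_nat gtn_eqF.
Qed.

Lemma det_mx22 (R : comPzRingType) (A : 'M[R]_2) :
  \det A = A 0 0 * A 1 1 - A 0 1 * A 1 0.
Proof.
rewrite (expand_det_row _ 0) !big_ord_recl big_ord0 /cofactor !det_mx11 !mxE /=.
rewrite addr0 expr0 expr1 mul1r mulN1r mulrN.
by congr (_ * _ - _ * _); congr (A _ _); apply: val_inj.
Qed.

Lemma mulmx22E (R : pzSemiRingType) (A B : 'M[R]_2) i j :
  (A *m B) i j = A i 0 * B 0 j + A i 1 * B 1 j.
Proof.
rewrite mxE !big_ord_recl big_ord0 addr0.
by have -> : lift ord0 ord0 = 1 :> 'I_2 by apply: val_inj.
Qed.

Section ContinuantMatrix.
Variable R : comPzRingType.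
Implicit Types (x : R) (s t : seq R).

Definition cf_step x : 'M[R]_2 :=
  \matrix_(i, j) if (i == 0) && (j == 0) then x else (i != j)%:R.

Definition cf_mx s : 'M[R]_2 := \prod_(x <- s) cf_step x.

Lemma cf_mx_nil : cf_mx [::] = 1.
Proof. exact: big_nil. Qed.

Lemma cf_mx_cons x s : cf_mx (x :: s) = cf_step x *m cf_mx s.
Proof. by rewrite /cf_mx big_cons. Qed.

Lemma cf_mx_cat s t : cf_mx (s ++ t) = cf_mx s *m cf_mx t.
Proof. by rewrite /cf_mx big_cat. Qed.

Lemma cf_mx_rcons s x : cf_mx (rcons s x) = cf_mx s *m cf_step x.
Proof. by rewrite -cats1 cf_mx_cat cf_mx_cons cf_mx_nil mulmx1. Qed.

Lemma tr_cf_step x : (cf_step x)^T = cf_step x.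
Proof. by apply/matrixP => i j; rewrite !mxE eq_sym andbC [j == i]eq_sym. Qed.

Lemma cf_mx_rev s : cf_mx (rev s) = (cf_mx s)^T.
Proof.
elim: s => [|x s IH]; first by rewrite /= cf_mx_nil trmx1.
by rewrite rev_cons cf_mx_rcons IH cf_mx_cons trmx_mul tr_cf_step.
Qed.

Lemma det_cf_step x : \det (cf_step x) = -1.
Proof. by rewrite det_mx22 !mxE /= mulr0 mulr1 sub0r. Qed.

Lemma det_cf_mx s : \det (cf_mx s) = (-1) ^+ size s.
Proof.
elim: s => [|x s IH]; first by rewrite cf_mx_nil det1.
by rewrite cf_mx_cons det_mulmx IH det_cf_step exprS.
Qed.

Lemma cf_mx_cons00 x s : cf_mx (x :: s) 0 0 = x * cf_mx s 0 0 + cf_mx s 1 0.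
Proof. by rewrite cf_mx_cons mulmx22E !mxE /= mul1r. Qed.

Lemma cf_mx_cons10 x s : cf_mx (x :: s) 1 0 = cf_mx s 0 0.
Proof. by rewrite cf_mx_cons mulmx22E !mxE /= mul1r mul0r addr0. Qed.

Lemma cf_mx_palindrome s x :
  let M := cf_mx (s ++ [:: x + 1; x - 1] ++ rev s) in
  let N := cf_mx (rcons s x) in
  M 0 0 = N 0 0 ^+ 2 /\ M 1 0 = N 0 0 * N 1 0 + (-1) ^+ (size s).+1.
Proof.
have := det_cf_mx s; rewrite det_mx22 exprS mulN1r => <-.
rewrite !cf_mx_cat cf_mx_rev cf_mx_rcons !cf_mx_cons cf_mx_nil mulmx1.
rewrite /= !mulmx22E !mxE /=; split; ring.
Qed.

End ContinuantMatrix.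

Lemma cf_mx_map (R S : comPzRingType) (f : {rmorphism R -> S}) (s : seq R) :
  cf_mx (map f s) = map_mx f (cf_mx s).
Proof.
elim: s => [|x s IH]; first by rewrite !cf_mx_nil map_mx1.
rewrite /= !cf_mx_cons IH map_mxM; congr (_ *m _).
by apply/matrixP => i j; rewrite !mxE; case: ifP => _; rewrite ?rmorph_nat.
Qed.

Lemma cf_mx_col_gt0 (R : numDomainType) (s : seq R) :
  all (>= 0) s -> 0 < last 1 s ->
  0 < cf_mx s 0 0 /\ (s != [::] -> 0 < cf_mx s 1 0).
Proof.
elim: s => [|x s IH] /=; first by rewrite cf_mx_nil mxE ltr01.
case/andP => x_ge0 s_ge0 last_gt0; rewrite cf_mx_cons00 cf_mx_cons10.
case: s => [|y s] in IH s_ge0 last_gt0 *.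
  by rewrite cf_mx_nil !mxE /= mulr1 addr0 ltr01.
have [N00_gt0 N10_gt0] := IH s_ge0 last_gt0; split=> //.
exact: ltr_wpDl (mulr_ge0 x_ge0 (ltW N00_gt0)) (N10_gt0 isT).
Qed.

Lemma cfE (s : seq rat) : all (>= 0) s -> 0 < last 1 s ->
  cf s = cf_mx s 0 0 / cf_mx s 1 0.
Proof.
elim: s => [|x s IH] /=; first by rewrite cf_mx_nil !mxE /= invr0 mulr0.
case/andP => x_ge0 s_ge0 last_gt0; rewrite cf_mx_cons00 cf_mx_cons10.
case: s => [|y s] in IH s_ge0 last_gt0 *.
  by rewrite cf_mx_nil !mxE /= mulr1 addr0 divr1.
have [N00_gt0 _] := cf_mx_col_gt0 s_ge0 last_gt0.
by rewrite IH // invf_div mulrDl mulfK // lt0r_neq0.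
Qed.

Lemma coprimez_cf_mx (s : seq int) : coprimez (cf_mx s 0 0) (cf_mx s 1 0).
Proof.
have := det_cf_mx s; rewrite det_mx22; set e := (-1) ^+ size s => det_e.
apply/coprimezP; exists (e * cf_mx s 1 1, - (e * cf_mx s 0 1)) => /=.
transitivity (e * (cf_mx s 0 0 * cf_mx s 1 1 - cf_mx s 0 1 * cf_mx s 1 0)).
  by ring.
by rewrite det_e -exprD -signr_odd addnn odd_double.
Qed.

Lemma cf_intE (s : seq int) : all (>= 0) s -> 0 < last 1 s ->
  cf (map intr s) = (cf_mx s 0 0)%:~R / (cf_mx s 1 0)%:~R.
Proof.
move=> s_ge0 last_gt0; rewrite cfE ?cf_mx_map ?mxE //.
  by rewrite all_map; apply: sub_all s_ge0 => z /=; rewrite ler0z.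
by rewrite -(rmorph1 intr) last_map ltr0z.
Qed.

Lemma numq_denq_cf_int (s : seq int) :
  all (>= 0) s -> 0 < last 1 s -> s != [::] ->
  numq (cf (map intr s)) = cf_mx s 0 0 /\ denq (cf (map intr s)) = cf_mx s 1 0.
Proof.
move=> s_ge0 last_gt0 s_nil.
have [_ /(_ s_nil) N10_gt0] := cf_mx_col_gt0 s_ge0 last_gt0.
have := coprimez_cf_mx s; rewrite coprimezE => cop.
rewrite cf_intE // coprimeq_num // coprimeq_den // gtr0_sg // mul1r gt_eqF //.
by rewrite gtr0_norm.
Qed.

Theorem theorem3p18 (n : nat) (a : nat -> nat) (p q : nat) :
  (0 < n)%N ->
  (forall i, (0 < i <= n)%N -> (0 < a i)%N) ->
  ~ (n = 1%N /\ a 1%N = 1%N) ->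
  coprime p q -> (0 < p)%N -> (0 < q)%N ->
  cf [seq (a i)%:R | i <- iota 1 n] = p%:R / q%:R ->
  cf ([seq (a i)%:R | i <- iota 1 n.-1]
      ++ [:: (a n)%:R + 1; (a n)%:R - 1]
      ++ [seq (a i)%:R | i <- rev (iota 1 n.-1)])
  = (p ^ 2)%:R / (p%:R * q%:R + (-1) ^+ n).
Proof.
move=> n_gt0 a_gt0 not_trivial cop_pq _ q_gt0 cf_pq.
have an_gt0 : (0 < a n)%N by rewrite a_gt0 ?n_gt0 ?leqnn.
have iota_n : iota 1 n = rcons (iota 1 n.-1) n.
  by rewrite -{1}(prednK n_gt0) iota_rcons add1n prednK.
set L : seq rat := [seq (a i)%:R | i <- iota 1 n.-1].
set s : seq int := [seq (a i)%:Z | i <- iota 1 n].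
have s_rat : map intr s = [seq (a i)%:R | i <- iota 1 n] :> seq rat.
  by rewrite -map_comp.
have [s_num s_den] : cf_mx s 0 0 = p /\ cf_mx s 1 0 = q.
  have s_ge0 : all (>= 0) s by apply/allP => _ /mapP [i _ ->].
  have s_last : 0 < last 1 s by rewrite /s iota_n map_rcons last_rcons ltz_nat.
  have s_nil : s != [::] by rewrite -size_eq0 size_map size_iota -lt0n.
  have [<- <-] := numq_denq_cf_int s_ge0 s_last s_nil.
  by rewrite s_rat cf_pq; apply: numq_denq_natr_div.
have [N00 N10] : cf_mx (rcons L (a n)%:R) 0 0 = p%:R /\
                 cf_mx (rcons L (a n)%:R) 1 0 = q%:R.
  by rewrite -map_rcons -iota_n -s_rat cf_mx_map !mxE s_num s_den.
have [t00 t10] := cf_mx_palindrome L (a n)%:R.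
rewrite map_rev -/L cfE ?t00 ?t10 ?N00 ?N10
        ?size_map ?size_iota ?prednK ?natrX //.
  have L_ge0 : all (>= 0) L by rewrite all_map; apply/allP => i _; exact: ler0n.
  by rewrite !all_cat all_rev L_ge0 /= !andbT addr_ge0 // subr_ge0 ler1n.
rewrite last_palindrome /L; case En : n.-1 => [|?] /=.
  have n1 : n = 1%N by rewrite -(prednK n_gt0) En.
  rewrite subr_gt0 ltr1n ltn_neqAle an_gt0 andbT eq_sym.
  by apply/eqP => an1; apply: not_trivial; split; last rewrite -{1}n1.
by rewrite ltr0n a_gt0 // -(prednK n_gt0) En.
Qed.
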